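(* $$\mathrm{toi}(K_t \square K_s) = \begin{cases} t+s-1 &\text{ if } t, s\geq 2 \text{ and } \max\{s,t\} \geq 4\\ 4 &\text{ if } s=t=3\\ 3 &\text{ if } s=3 \text{ and } t=2 \end{cases}$$
   Context: $\mathrm{toi}(G)$ is the maximum $t$ such that $G$ contains a totally odd strong immersion of $K_t$ (an injective map of $V(K_t)$ into $V(G)$ with pairwise edge-disjoint odd paths joining each pair of terminals, no terminal being an interior vertex of any path). $G\square H$ is the Cartesian product: vertex set $V(G)\times V(H)$, with $(g_1,h_1)\sim(g_2,h_2)$ iff ($g_1=g_2$ and $h_1h_2\in E(H)$) or ($h_1=h_2$ and $g_1g_2\in E(G)$). *)

(* Graphs are symmetric irreflexive relations on finite types. *)
From mathcomp Require Import all_boot.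
Set Implicit Arguments. Unset Strict Implicit. Unset Printing Implicit Defensive.

Definition complete_graph (t : nat) : rel 'I_t := fun i j => i != j.

Arguments complete_graph t : clear implicits.

Definition cart_prod (A B : finType) (eA : rel A) (eB : rel B) : rel (A * B) :=
  fun u v => ((u.1 == v.1) && eB u.2 v.2) || ((u.2 == v.2) && eA u.1 v.1).

Definition walk_edges (V : finType) (x : V) (p : seq V) : seq (V * V) :=
  zip (x :: p) p.

Definition odd_path (V : finType) (e : rel V) (x y : V) (p : seq V) : bool :=
  [&& path e x p, uniq (x :: p), last x p == y & odd (size p)].

Definition interior (V : finType) (x : V) (p : seq V) : seq V :=
  behead (belast x p).

Definition edge_disjoint (V : finType) (x : V) (p : seq V) (y : V) (q : seq V) : bool :=
  ~~ has (fun uv : V * V =>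
            has (fun ab : V * V => [set uv.1; uv.2] == [set ab.1; ab.2])
                (walk_edges y q))
         (walk_edges x p).

(* G contains a totally odd strong immersion of K_n: terminals f, and for each
   pair i < j an odd path P i j (stored as its tail) from f i to f j; paths are
   pairwise edge-disjoint and no terminal is an interior vertex of any path. *)
Definition toi_immersion (V : finType) (e : rel V) (n : nat) : Prop :=
  exists (f : 'I_n -> V) (P : 'I_n -> 'I_n -> seq V),
    [/\ injective f,
        (forall i j : 'I_n, i < j -> odd_path e (f i) (f j) (P i j)),
        (forall i j k l : 'I_n, i < j -> k < l -> (i, j) != (k, l) ->
            edge_disjoint (f i) (P i j) (f k) (P k l))
      & (forall i j k : 'I_n, i < j -> f k \notin interior (f i) (P i j))].

Definition toi_is (V : finType) (e : rel V) (m : nat) : Prop :=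
  toi_immersion e m /\ (forall n, toi_immersion e n -> n <= m).

(* Upper bound: the n - 1 odd paths leaving a terminal of an immersion of K_n
   begin with pairwise distinct edges, so n - 1 is at most the degree t + s - 2 of
   K_t □ K_s.

   Lower bound when s >= 4: take as terminals the t + s - 1 vertices of row 0 and
   column 0.  Two terminals on a common line are joined by their edge, and (0,b) is
   joined to (a,0), a, b <> 0, by the path (0,b) (a,b) (a,σb) (a,0), where σ is a
   cyclic permutation of the s - 1 >= 3 nonzero columns.  Since σ has neither
   fixed points nor 2-cycles, these paths are pairwise edge-disjoint.

   For K_3 □ K_3 and K_2 □ K_3 explicit immersions give 4 and 3, and the degree
   bound is not attained.  An immersion is the same thing as a routing of the
   pairs of a list of terminals, and since paths can be reversed the order of that
   list is irrelevant; an exhaustive search over terminal sets and odd routes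
   through non-terminals finds no routing. *)

From mathcomp Require Import all_boot zmodp zify.
Set Implicit Arguments. Unset Strict Implicit. Unset Printing Implicit Defensive.

Section Pairs.
Variable T : eqType.

Definition pairs (s : seq T) : seq (T * T) :=
  [seq xy <- [seq (x, y) | x <- s, y <- s] | index xy.1 s < index xy.2 s].

Lemma mem_pairs s x y :
  ((x, y) \in pairs s) = [&& x \in s, y \in s & index x s < index y s].
Proof.
rewrite mem_filter andbC.
apply/andP/and3P => [[/allpairsP[[a b] [? ? [-> ->]]]] | [xs ys lt]] //.
by split=> //; apply/allpairsP; exists (x, y).
Qed.

Lemma pairs_uniq s : uniq s -> uniq (pairs s).
Proof.
by move=> us; apply/filter_uniq/allpairs_uniq => // -[? ?] [? ?] _ _ [-> ->].
Qed.

Lemma pairs_neq s x y : (x, y) \in pairs s -> x != y.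
Proof. by rewrite mem_pairs => /and3P[_ _]; apply: contraTneq => ->; rewrite ltnn. Qed.

Lemma pairs_asym s x y : (x, y) \in pairs s -> (y, x) \notin pairs s.
Proof. by rewrite !mem_pairs => /and3P[_ _ lt]; rewrite ltnNge ltnW ?andbF. Qed.

Lemma pairs_total s x y : x \in s -> y \in s -> x != y ->
  ((x, y) \in pairs s) || ((y, x) \in pairs s).
Proof.
move=> xs ys; rewrite !mem_pairs xs ys /=; apply: contraNT; rewrite negb_or -!leqNgt.
by rewrite -eqn_leq => /eqP/(congr1 (nth x s)); rewrite !nth_index // => ->.
Qed.

Lemma pairs_nth x0 s i j : uniq s -> i < j < size s ->
  (nth x0 s i, nth x0 s j) \in pairs s.
Proof.
move=> us /andP[ij js]; have lt_i := ltn_trans ij js.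
by rewrite mem_pairs !mem_nth ?index_uniq.
Qed.

Fixpoint subseqs_of_size (n : nat) (s : seq T) : seq (seq T) :=
  match n, s with
  | 0, _ => [:: [::]]
  | _.+1, [::] => [::]
  | n'.+1, x :: s' => [seq x :: l | l <- subseqs_of_size n' s'] ++ subseqs_of_size n s'
  end.

Lemma mem_subseqs_of_size l s : subseq l s -> l \in subseqs_of_size (size l) s.
Proof.
elim: s l => [|x s IH] [|y l] //= sub; rewrite ?mem_head // mem_cat.
by move: sub; case: eqP => [-> /IH lsub | _ /IH ->]; rewrite ?map_f ?orbT.
Qed.

End Pairs.

Section EdgeLists.
Variable T : eqType.

Definition flip (uv : T * T) : T * T := (uv.2, uv.1).

Definition same_edge (uv ab : T * T) : bool := (uv == ab) || (uv == flip ab).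

Definition edges_apart (E F : seq (T * T)) : bool :=
  allrel (fun uv ab => ~~ same_edge uv ab) E F.

Lemma same_edgeC uv ab : same_edge uv ab = same_edge ab uv.
Proof.
case: uv ab => [u v] [a b]; rewrite /same_edge /flip /= !xpair_eqE.
by apply/idP/idP => /orP[] /andP[/eqP-> /eqP->]; rewrite !eqxx ?orbT.
Qed.

Lemma same_edge_flip uv ab : same_edge (flip uv) ab = same_edge uv ab.
Proof.
case: uv ab => [u v] [a b]; rewrite /same_edge /flip /= !xpair_eqE.
by apply/idP/idP => /orP[] /andP[/eqP-> /eqP->]; rewrite !eqxx ?orbT.
Qed.

Lemma edges_apartC E F : edges_apart E F = edges_apart F E.
Proof.
by rewrite /edges_apart allrelC; apply: eq_all => ?; apply: eq_all => ?; rewrite same_edgeC.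
Qed.

Lemma edges_apart_catr E F G :
  edges_apart E (F ++ G) = edges_apart E F && edges_apart E G.
Proof. exact: allrel_catr. Qed.

Lemma edges_apart_flip E F : edges_apart (rev (map flip E)) F = edges_apart E F.
Proof.
rewrite /edges_apart allrel_revl allrel_mapl.
by apply: eq_all => ?; apply: eq_all => ?; rewrite same_edge_flip.
Qed.

Lemma edges_apart_cut (A : {pred T}) E F :
  all (fun uv => (uv.1 \notin A) || (uv.2 \notin A)) E ->
  all (fun ab => (ab.1 \in A) && (ab.2 \in A)) F -> edges_apart E F.
Proof.
move=> /allP EA /allP FA; apply/allrelP => -[u v] [a b] /EA uvA /FA /andP[aA bA].
apply: contraL uvA; rewrite /same_edge /flip /= !xpair_eqE.
by case/orP=> /andP[/eqP-> /eqP->]; rewrite ?aA ?bA.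
Qed.

(* [if] rather than [&&]: vm_compute evaluates both arguments of [&&], which would
   defeat the pruning. *)
Fixpoint disjoint_pick (used : seq (T * T)) (cands : seq (seq (seq (T * T)))) : bool :=
  if cands is C :: cands' then
    has (fun E => if edges_apart E used then disjoint_pick (E ++ used) cands' else false) C
  else true.

Lemma disjoint_pick_complete (I : eqType) (C : I -> seq (seq (T * T)))
    (W : I -> seq (T * T)) (L : seq I) used :
  uniq L -> (forall i, i \in L -> W i \in C i) ->
  {in L &, forall i j, i != j -> edges_apart (W i) (W j)} ->
  {in L, forall i, edges_apart (W i) used} ->
  disjoint_pick used (map C L).
Proof.
elim: L used => [|i L IH] used //= /andP[iL uL] WC Wdisj Wused.
apply/hasP; exists (W i); first by rewrite WC ?mem_head.
rewrite Wused ?mem_head //; apply: IH => // [j jL | j k jL kL | j jL].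
- by rewrite WC // inE jL orbT.
- by apply: Wdisj; rewrite inE ?jL ?kL orbT.
rewrite edges_apart_catr; apply/andP; split.
  by rewrite edges_apartC Wdisj ?mem_head ?inE ?jL ?orbT //; apply: contraNneq iL => ->.
by rewrite Wused // inE jL orbT.
Qed.

End EdgeLists.

Arguments flip {T}.

Section Walks.
Variables (V : finType) (e : rel V).

Lemma eq_set2 (a b c d : V) : ([set a; b] == [set c; d]) = same_edge (a, b) (c, d).
Proof.
rewrite /same_edge /flip /= !xpair_eqE.
apply/eqP/idP => [E | /orP[] /andP[/eqP-> /eqP->] //]; last by rewrite setUC.
have: [&& a \in [set c; d], b \in [set c; d], c \in [set a; b] & d \in [set a; b]].
  by rewrite -E set21 set22 E set21 set22.
rewrite !in_set2 => /and4P[].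
by do 4 (case/orP=> /eqP ?); subst; rewrite ?eqxx ?orbT.
Qed.

Lemma edge_disjointE (x y : V) (p q : seq V) :
  edge_disjoint x p y q = edges_apart (walk_edges x p) (walk_edges y q).
Proof.
rewrite /edge_disjoint -all_predC; apply: eq_all => -[u v] /=.
by rewrite -all_predC; apply: eq_all => -[a b] /=; rewrite eq_set2.
Qed.

Definition reverse_walk (x : V) (p : seq V) : seq V := rev (belast x p).

Lemma last_reverse_walk (x : V) p : last (last x p) (reverse_walk x p) = x.
Proof. by case: p => [|y p] //; rewrite /reverse_walk /= rev_cons last_rcons. Qed.

Lemma walk_edges_rcons (x y : V) p :
  walk_edges x (rcons p y) = rcons (walk_edges x p) (last x p, y).
Proof. by rewrite /walk_edges; elim: p x => [|z p IH] x //=; rewrite IH. Qed.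

Lemma walk_edges_reverse (x : V) p :
  walk_edges (last x p) (reverse_walk x p) = rev (map flip (walk_edges x p)).
Proof.
elim: p x => [|y p IH] x //=.
rewrite /reverse_walk /= rev_cons walk_edges_rcons IH last_reverse_walk.
by rewrite /walk_edges /= rev_cons.
Qed.

Lemma interior_reverse (x y : V) p : interior y (reverse_walk x p) = rev (interior x p).
Proof. by case: p => [|z p] //; rewrite /interior /reverse_walk /= rev_cons belast_rcons. Qed.

Lemma odd_path_reverse (x y : V) p : symmetric e ->
  odd_path e x y p -> odd_path e y x (reverse_walk x p).
Proof.
move=> sym_e /and4P[ep up /eqP <- op]; apply/and4P; split.
- by rewrite rev_path (@eq_path _ _ e) // => a b; apply: sym_e.
- by rewrite -rev_rcons -lastI rev_uniq.
- by rewrite last_reverse_walk.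
by rewrite size_rev size_belast.
Qed.

Lemma pairs_set2_inj (l : seq V) x y u v : (x, y) \in pairs l -> (u, v) \in pairs l ->
  [set x; y] = [set u; v] -> (x, y) = (u, v).
Proof.
move=> xy uv /eqP; rewrite eq_set2 => /orP[/eqP // | /eqP E].
by move: (pairs_asym uv); rewrite -[(v, u)]/(flip (u, v)) -E xy.
Qed.

Definition toi_routing (l : seq V) (R : V -> V -> seq V) : Prop :=
  [/\ forall x y, (x, y) \in pairs l -> odd_path e x y (R x y),
      forall x y u v, (x, y) \in pairs l -> (u, v) \in pairs l -> (x, y) != (u, v) ->
        edge_disjoint x (R x y) u (R u v)
    & forall x y z, (x, y) \in pairs l -> z \in l -> z \notin interior x (R x y)].

Lemma toi_immersion_of_routing l R : uniq l -> toi_routing l R -> toi_immersion e (size l).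
Proof.
move=> ul [Rodd Rdisj Rint].
pose f (i : 'I_(size l)) := tnth (in_tuple l) i.
have f_pairs (i j : 'I_(size l)) : i < j -> (f i, f j) \in pairs l.
  by move=> ij; rewrite /f !(tnth_nth (f i)) pairs_nth ?ij ?ltn_ord.
have f_inj : injective f.
  move=> i j; rewrite /f !(tnth_nth (f i)) /= => /eqP.
  by rewrite nth_uniq ?ltn_ord // => /eqP/val_inj.
exists f, (fun i j => R (f i) (f j)); split => //.
- by move=> i j ij; apply/Rodd/f_pairs.
- move=> i j k m ij km ne; apply: Rdisj; rewrite ?f_pairs //.
  by apply: contra ne => /eqP[/f_inj-> /f_inj->].
by move=> i j k ij; apply: Rint; rewrite ?f_pairs // mem_tnth.
Qed.

Lemma toi_routing_of_immersion n : toi_immersion e n ->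
  exists l R, [/\ uniq l, size l = n & toi_routing l R].
Proof.
case=> f [P [f_inj Podd Pdisj Pint]].
pose R x y := oapp (fun ij : 'I_n * 'I_n => P ij.1 ij.2) [::]
                   [pick ij | (f ij.1, f ij.2) == (x, y)].
have RE i j : R (f i) (f j) = P i j.
  rewrite /R; case: pickP => [[i' j'] /eqP[/f_inj-> /f_inj->] // | /(_ (i, j))].
  by rewrite eqxx.
have pairsE x y : (x, y) \in pairs (codom f) ->
    exists i j : 'I_n, [/\ i < j, x = f i & y = f j].
  rewrite mem_pairs => /and3P[/codomP[i ->] /codomP[j ->]].
  by rewrite codomE !index_map // -enumT !index_enum_ord => ij; exists i, j.
exists (codom f), R; split.
- by rewrite codomE map_inj_uniq ?enum_uniq.
- by rewrite size_codom card_ord.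
split.
- by move=> x y /pairsE[i [j [ij -> ->]]]; rewrite RE; apply: Podd.
- move=> x y u v /pairsE[i [j [ij -> ->]]] /pairsE[k [m [km -> ->]]] ne.
  by rewrite !RE; apply: Pdisj => //; apply: contra ne => /eqP[-> ->].
by move=> x y z /pairsE[i [j [ij -> ->]]] /codomP[k ->]; rewrite RE; apply: Pint.
Qed.

Definition toi_routing_check (l : seq V) (R : V -> V -> seq V) : bool :=
  [&& all (fun xy => odd_path e xy.1 xy.2 (R xy.1 xy.2)) (pairs l),
      all (fun xy => all (fun uv => (xy != uv) ==>
             edges_apart (walk_edges xy.1 (R xy.1 xy.2)) (walk_edges uv.1 (R uv.1 uv.2)))
           (pairs l)) (pairs l)
    & all (fun xy => all (fun z => z \notin interior xy.1 (R xy.1 xy.2)) l) (pairs l)].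

Lemma toi_routing_checkP l R : toi_routing_check l R -> toi_routing l R.
Proof.
case/and3P=> /allP Rodd /allP Rdisj /allP Rint; split.
- by move=> x y /Rodd.
- move=> x y u v /Rdisj/allP Rxy /Rxy/implyP ne /ne.
  by rewrite edge_disjointE.
by move=> x y z /Rint/allP; apply.
Qed.

Lemma toi_routing_perm l l' R : symmetric e -> perm_eq l l' ->
  toi_routing l R -> exists R', toi_routing l' R'.
Proof.
move=> sym_e ll' [Rodd Rdisj Rint].
pose R' x y := if (x, y) \in pairs l then R x y else reverse_walk y (R y x).
have R'E x y : (x, y) \in pairs l' -> exists2 pq, pq \in pairs l &
    [/\ [set x; y] = [set pq.1; pq.2], odd_path e x y (R' x y),
        interior x (R' x y) =i interior pq.1 (R pq.1 pq.2)
      & forall F, edges_apart (walk_edges x (R' x y)) F =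
                  edges_apart (walk_edges pq.1 (R pq.1 pq.2)) F].
  move=> xy'; have xy_neq := pairs_neq xy'.
  move: xy'; rewrite mem_pairs -!(perm_mem ll') => /and3P[xl yl _].
  have [xy | nxy] := boolP ((x, y) \in pairs l).
    by exists (x, y); rewrite // /R' xy; split=> //; apply: Rodd.
  have yx : (y, x) \in pairs l.
    by move: (pairs_total xl yl xy_neq); rewrite (negbTE nxy).
  have lastx : last y (R y x) = x by case/and4P: (Rodd y x yx) => _ _ /eqP.
  exists (y, x); rewrite // /R' (negbTE nxy); split.
  - exact: setUC.
  - exact/odd_path_reverse/Rodd.
  - by move=> z; rewrite interior_reverse mem_rev.
  by move=> F; rewrite -{1}lastx walk_edges_reverse edges_apart_flip.
exists R'; split.
- by move=> x y /R'E[pq _ []].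
- move=> x y u v xy uv ne.
  have [[p q] pql [xyE _ _ Exy]] := R'E x y xy.
  have [[p' q'] pql' [uvE _ _ Euv]] := R'E u v uv.
  rewrite edge_disjointE Exy edges_apartC Euv edges_apartC -edge_disjointE.
  apply: Rdisj => //; apply: contra ne => /eqP[Ep Eq]; apply/eqP/(pairs_set2_inj xy uv).
  by rewrite xyE uvE Ep Eq.
move=> x y z /R'E[[p q] pql [_ _ Ixy _]] zl'.
by rewrite Ixy; apply: Rint; rewrite ?(perm_mem ll').
Qed.

End Walks.

Section Search.
Variables (V : finType) (e : rel V).

Fixpoint simple_paths (N : seq V) (x y : V) (k : nat) : seq (seq V) :=
  (if e x y then [:: [:: y]] else [::]) ++
  if k is k'.+1 then
    flatten [seq [seq v :: p | p <- simple_paths [seq w <- N | w != v] v y k'] | v <- N & e x v]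
  else [::].

Lemma mem_simple_paths N (x y : V) q k : path e x (rcons q y) -> uniq q ->
  {subset q <= N} -> size q <= k -> rcons q y \in simple_paths N x y k.
Proof.
elim: q x N k => [|v q IH] x N k /=.
  by case/andP=> exy _ _ _ _; case: k => [|k]; rewrite /= exy mem_head.
case/andP=> exv vp /andP[vq uq] qN; case: k => [|k] // sz.
rewrite /= mem_cat; apply/orP; right; apply/flattenP.
exists [seq v :: p | p <- simple_paths [seq w <- N | w != v] v y k].
  by apply: map_f; rewrite mem_filter exv qN ?mem_head.
apply: map_f; apply: IH => // w wq; rewrite mem_filter (qN w) ?inE ?wq ?orbT // andbT.
by apply: contraNneq vq => <-.
Qed.

Definition odd_routes (N : seq V) (x y : V) : seq (seq V) :=
  [seq p <- simple_paths N x y (size N) | odd (size p)].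

Lemma mem_odd_routes N (x y : V) p :
  odd_path e x y p -> {subset interior x p <= N} -> p \in odd_routes N x y.
Proof.
case/lastP: p => [|q z] /and4P[ep up /eqP lz op] //.
rewrite last_rcons in lz; subst z; rewrite /interior belast_rcons /= => qN.
have uq : uniq q by move: up; rewrite /= rcons_uniq => /and3P[].
by rewrite mem_filter op mem_simple_paths ?(uniq_leq_size uq qN).
Qed.

Definition toi_routable (vs l : seq V) : bool :=
  let N := [seq v <- vs | v \notin l] in
  disjoint_pick [::] [seq [seq walk_edges xy.1 p | p <- odd_routes N xy.1 xy.2] | xy <- pairs l].

Lemma toi_routable_of_routing vs l R : (forall v, v \in vs) -> uniq l ->
  toi_routing e l R -> toi_routable vs l.
Proof.
move=> vsP ul [Rodd Rdisj Rint].
apply: (disjoint_pick_complete (W := fun xy => walk_edges xy.1 (R xy.1 xy.2))).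
- exact: pairs_uniq.
- move=> [x y] xy; apply/map_f/mem_odd_routes => [|z zi]; first exact: Rodd.
  by rewrite mem_filter vsP andbT; apply: contraTN zi; apply: Rint.
- by move=> [x y] [u v] xy uv ne; rewrite -edge_disjointE; apply: Rdisj.
by move=> xy _; rewrite /edges_apart allrel0r.
Qed.

Definition toi_search_refutes (vs : seq V) (n : nat) : bool :=
  all (fun l => ~~ toi_routable vs l) (subseqs_of_size n vs).

Lemma toi_search_refutesP vs n : symmetric e -> uniq vs -> (forall v, v \in vs) ->
  toi_search_refutes vs n -> ~ toi_immersion e n.
Proof.
move=> sym_e uvs vsP /allP refute /toi_routing_of_immersion[l [R [ul sz lR]]].
pose l' := [seq v <- vs | v \in l].
have ll' : perm_eq l l'.
  by apply: uniq_perm; rewrite ?filter_uniq // => v; rewrite mem_filter vsP andbT.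
have [R' l'R'] := toi_routing_perm sym_e ll' lR.
have := refute l'; rewrite -sz (perm_size ll') mem_subseqs_of_size ?filter_subseq //.
move=> /(_ isT).
by rewrite (toi_routable_of_routing _ _ l'R') // -(perm_uniq ll').
Qed.

End Search.

Lemma toi_immersion_degree (V : finType) (e : rel V) n :
  toi_immersion e n.+1 -> exists x, n <= #|[set y | e x y]|.
Proof.
case=> f [P [_ Podd Pdisj _]]; exists (f ord0).
pose h (j : 'I_n) := head (f ord0) (P ord0 (lift ord0 j)).
have first_step j : exists q, P ord0 (lift ord0 j) = h j :: q /\ e (f ord0) (h j).
  case/and4P: (Podd ord0 (lift ord0 j) isT); rewrite /h.
  by case: (P _ _) => [|y q] //= /andP[efy _] _ _ _; exists q.
have h_inj : injective h.
  move=> j k hjk; apply/eqP/negPn/negP => jk.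
  have := Pdisj ord0 (lift ord0 j) ord0 (lift ord0 k) isT isT.
  rewrite xpair_eqE eqxx (inj_eq (@lift_inj _ ord0)) jk => /(_ isT).
  have [[q [-> _]] [q' [-> _]]] := (first_step j, first_step k).
  by rewrite edge_disjointE /walk_edges /edges_apart /= allrel_cons2 /same_edge hjk eqxx.
rewrite -[n in n <= _]card_ord -(card_codom h_inj); apply/subset_leq_card/subsetP.
by move=> y /codomP[j ->]; rewrite inE; have [q []] := first_step j.
Qed.

Lemma walk_edges_map (V W : finType) (h : V -> W) x p :
  walk_edges (h x) (map h p) = [seq (h uv.1, h uv.2) | uv <- walk_edges x p].
Proof. by rewrite /walk_edges; elim: p x => [|y p IH] x //=; rewrite IH. Qed.

Lemma edge_disjoint_map (V W : finType) (h : V -> W) : injective h ->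
  forall x p y q, edge_disjoint (h x) (map h p) (h y) (map h q) = edge_disjoint x p y q.
Proof.
move=> h_inj x p y q; rewrite !edge_disjointE !walk_edges_map /edges_apart.
rewrite allrel_mapl allrel_mapr; apply: eq_all => uv; apply: eq_all => ab.
by rewrite /same_edge /flip /= !xpair_eqE !(inj_eq h_inj).
Qed.

Lemma toi_immersion_transfer (V W : finType) (e : rel V) (e' : rel W) (h : V -> W) n :
  injective h -> {homo h : x y / e x y >-> e' x y} ->
  toi_immersion e n -> toi_immersion e' n.
Proof.
move=> h_inj h_hom [f [P [f_inj Podd Pdisj Pint]]].
exists (h \o f), (fun i j => map h (P i j)); split.
- by move=> i j /h_inj/f_inj.
- move=> i j ij; case/and4P: (Podd i j ij) => ep up lp op; apply/and4P; split.
  + exact: homo_path ep.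
  + by rewrite /= mem_map // map_inj_uniq.
  + by rewrite /= last_map (inj_eq h_inj).
  + by rewrite size_map.
- by move=> i j k m ij km ne; rewrite /= edge_disjoint_map //; apply: Pdisj.
by move=> i j k ij; rewrite /interior /= belast_map behead_map mem_map //; apply: Pint.
Qed.

Notation rook t s := (cart_prod (complete_graph t) (complete_graph s)).

Lemma rook_sym t s : symmetric (rook t s).
Proof. by move=> [a b] [c d]; rewrite /cart_prod /complete_graph /= !(eq_sym a) !(eq_sym b). Qed.

Lemma toi_rook_swap t s n : toi_immersion (rook s t) n -> toi_immersion (rook t s) n.
Proof.
apply: (toi_immersion_transfer (h := fun x => (x.2, x.1))); first by move=> [a b] [c d] [-> ->].
by move=> [a b] [c d]; rewrite /cart_prod /= orbC.
Qed.

Lemma rook_degree t s (x : 'I_t * 'I_s) : #|[set y | rook t s x y]| <= t.-1 + s.-1.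
Proof.
set row := [set (a, x.2) | a in [set~ x.1]]; set col := [set (x.1, b) | b in [set~ x.2]].
apply: (@leq_trans #|row :|: col|).
  apply/subset_leq_card/subsetP => -[a b]; rewrite !inE /cart_prod /complete_graph /=.
  case/orP=> /andP[/eqP <- ne]; apply/orP; [right | left]; apply/imsetP.
    by exists b; rewrite // !inE eq_sym.
  by exists a; rewrite // !inE eq_sym.
apply: leq_trans (leq_card_setU _ _) _.
by rewrite leq_add // (leq_trans (leq_imset_card _ _)) // cardsC1 card_ord.
Qed.

Lemma toi_rook_le t s n : 0 < t -> 0 < s -> toi_immersion (rook t s) n -> n <= t + s - 1.
Proof.
case: n => [|n] // t0 s0 /toi_immersion_degree[x /leq_trans/(_ (rook_degree x))].
lia.
Qed.

(* Unlike [enum], this list is evaluated by vm_compute. *)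
Definition rook_vertices t s : seq ('I_t.+1 * 'I_s.+1) :=
  [seq (a, b) | a <- mkseq inZp t.+1, b <- mkseq inZp s.+1].

Lemma mkseq_inZp n : mkseq inZp n.+1 = enum 'I_n.+1.
Proof.
apply: (inj_map val_inj); rewrite val_enum_ord /mkseq -map_comp -[RHS]map_id.
by apply/eq_in_map => i; rewrite mem_iota /= => lti; apply: modn_small.
Qed.

Lemma rook_vertices_uniq t s : uniq (rook_vertices t s).
Proof.
by rewrite /rook_vertices !mkseq_inZp allpairs_uniq ?enum_uniq // => -[? ?] [? ?] _ _ [-> ->].
Qed.

Lemma mem_rook_vertices t s x : x \in rook_vertices t s.
Proof. by case: x => a b; rewrite /rook_vertices !mkseq_inZp allpairs_f ?mem_enum. Qed.

Section Cross.
Variables t s : nat.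
Hypothesis s_gt2 : 2 < s.

(* The permutation σ of the proof: the cycle 1 -> 2 -> ... -> s -> 1. *)
Definition next_col (b : 'I_s.+1) : 'I_s.+1 := inord (if b == s :> nat then 1 else b.+1).

Lemma next_colE (b : 'I_s.+1) :
  (b = s :> nat /\ next_col b = 1 :> nat) \/ (b < s /\ next_col b = b.+1 :> nat).
Proof.
by rewrite /next_col; case: eqP => bs; [left | right]; rewrite inordK; have := ltn_ord b; lia.
Qed.

Lemma next_col_neq0 b : next_col b != ord0.
Proof. by rewrite -val_eqE /=; case: (next_colE b); lia. Qed.

Definition cross : seq ('I_t.+1 * 'I_s.+1) :=
  [seq (ord0, b) | b <- enum 'I_s.+1] ++ [seq (lift ord0 a, ord0) | a <- enum 'I_t].

Definition cross_route (x y : 'I_t.+1 * 'I_s.+1) : seq ('I_t.+1 * 'I_s.+1) :=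
  if (x.2 != ord0) && (y.1 != ord0) then [:: (y.1, x.2); (y.1, next_col x.2); y]
  else [:: y].

Lemma size_cross : size cross = t + s + 1.
Proof. by rewrite size_cat !size_map -!enumT !size_enum_ord; lia. Qed.

Lemma mem_cross x : (x \in cross) = (x.1 == ord0) || (x.2 == ord0).
Proof.
case: x => a b; rewrite mem_cat /=; apply/idP/idP.
  by case/orP=> /mapP[c _ [-> ->]]; rewrite eqxx ?orbT.
case/orP=> /eqP->; first by rewrite map_f ?mem_enum.
by case: (unliftP ord0 a) => [a' -> | ->]; rewrite map_f ?mem_enum ?orbT.
Qed.

Lemma cross_uniq : uniq cross.
Proof.
rewrite cat_uniq; apply/and3P; split.
- by rewrite map_inj_uniq ?enum_uniq // => b c [].
- by apply/hasPn => _ /mapP[a _ ->]; apply/mapP => -[b _ []].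
by rewrite map_inj_uniq ?enum_uniq // => a c [/val_inj].
Qed.

Lemma cross_pairs_col x y : (x, y) \in pairs cross -> x.1 != ord0 -> y.1 != ord0.
Proof.
move=> xy x1; move: xy; rewrite mem_pairs !index_cat mem_cat.
set row := [seq (ord0, b) | b <- _]; set col := [seq (lift ord0 a, ord0) | a <- _].
have -> : (x \in row) = false by apply: contraNF x1 => /mapP[b _ ->].
case/and3P=> _; rewrite mem_cat; case: (boolP (y \in row)) => [yrow _ | _ /mapP[a _ ->] //].
by have := index_mem y row; rewrite yrow /=; lia.
Qed.

Lemma cross_route_odd x y : (x, y) \in pairs cross ->
  odd_path (rook t.+1 s.+1) x y (cross_route x y).
Proof.
move=> xy; have := cross_pairs_col xy; have := pairs_neq xy.
move: xy; rewrite mem_pairs => /and3P[]; rewrite !mem_cross.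
case: x y => [a b] [c d] /=; rewrite /cross_route /=.
have := next_colE b.
case: ifP; rewrite /odd_path /cart_prod /complete_graph /= ?inE !xpair_eqE -!val_eqE /=; lia.
Qed.

Lemma cross_route_interior x y z : (x, y) \in pairs cross -> z \in cross ->
  z \notin interior x (cross_route x y).
Proof.
move=> xy; have := cross_pairs_col xy; move: xy; rewrite mem_pairs => /and3P[].
rewrite !mem_cross /cross_route; case: x y z => [a b] [c d] [u v] /=.
have := next_colE b.
case: ifP; rewrite /interior /= ?inE ?xpair_eqE -?val_eqE /=; lia.
Qed.

Lemma long_routes_apart (b b' : 'I_s.+1) (c c' : 'I_t.+1) :
  b != ord0 -> b' != ord0 -> c != ord0 -> c' != ord0 -> (b, c) != (b', c') ->
  edges_apart (walk_edges (ord0, b) [:: (c, b); (c, next_col b); (c, ord0)])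
              (walk_edges (ord0, b') [:: (c', b'); (c', next_col b'); (c', ord0)]).
Proof.
have := next_colE b; have := next_colE b'.
rewrite /edges_apart /walk_edges /= !allrel_cons2 /same_edge /flip /= !xpair_eqE.
rewrite -!val_eqE /= => *.
by repeat (apply/andP; split); rewrite //; lia.
Qed.

Lemma cross_route_long x y : (x, y) \in pairs cross -> (x.2 != ord0) && (y.1 != ord0) ->
  x = (ord0, x.2) /\ y = (y.1, ord0).
Proof.
rewrite mem_pairs !mem_cross => /and3P[+ + _] /andP[x2 y1].
by case: x y x2 y1 => [a b] [c d] /= /negbTE-> /negbTE->; rewrite !orbF => /eqP-> /eqP->.
Qed.

Lemma long_route_cut x y : (x.2 != ord0) && (y.1 != ord0) ->
  all (fun uv => (uv.1 \notin cross) || (uv.2 \notin cross))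
      (walk_edges x [:: (y.1, x.2); (y.1, next_col x.2); y]).
Proof.
case/andP=> x2 y1.
rewrite /walk_edges /= !mem_cross /= (negbTE x2) (negbTE y1).
by rewrite (negbTE (next_col_neq0 _)) !orbT.
Qed.

Lemma cross_route_disjoint x y u v : (x, y) \in pairs cross -> (u, v) \in pairs cross ->
  (x, y) != (u, v) -> edge_disjoint x (cross_route x y) u (cross_route u v).
Proof.
move=> xy uv ne; rewrite edge_disjointE /cross_route.
have short_cut a b : (a, b) \in pairs cross ->
    all (fun ab => (ab.1 \in cross) && (ab.2 \in cross)) (walk_edges a [:: b]).
  by rewrite mem_pairs /= => /and3P[-> ->].
case: ifP => Lxy; case: ifP => Luv.
- have [Ex Ey] := cross_route_long xy Lxy; have [Eu Ev] := cross_route_long uv Luv.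
  case/andP: Lxy Luv => x2 y1 /andP[u2 v1].
  rewrite Ex Ey Eu Ev /=; apply: long_routes_apart => //.
  by apply: contraNneq ne => -[E2 E1]; rewrite Ex Ey Eu Ev E1 E2.
- by apply: edges_apart_cut; [apply: long_route_cut | apply: short_cut].
- by rewrite edges_apartC; apply: edges_apart_cut; [apply: long_route_cut | apply: short_cut].
rewrite /edges_apart /walk_edges /= allrel_cons2 /same_edge /= negb_or ne andbT /=.
by apply: contraNneq (pairs_asym xy) => -[-> ->].
Qed.

Lemma toi_cross : toi_immersion (rook t.+1 s.+1) (t + s + 1).
Proof.
rewrite -size_cross; apply: toi_immersion_of_routing cross_uniq _.
split; [exact: cross_route_odd | exact: cross_route_disjoint | exact: cross_route_interior].
Qed.

End Cross.

Definition rook_vertex t s (a b : nat) : 'I_t.+1 * 'I_s.+1 := (inZp a, inZp b).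

Lemma toi_K2K3 : toi_immersion (rook 2 3) 3.
Proof.
pose v := rook_vertex 1 2.
apply: (@toi_immersion_of_routing _ _ [:: v 0 0; v 0 1; v 0 2] (fun _ y => [:: y])) => //.
by apply: toi_routing_checkP; vm_compute.
Qed.

Definition K3K3_route (x y : 'I_3 * 'I_3) : seq ('I_3 * 'I_3) :=
  let v := rook_vertex 2 2 in
  if (x, y) == (v 0 1, v 1 0) then [:: v 1 1; v 1 2; v 1 0]
  else if (x, y) == (v 0 2, v 1 0) then [:: v 2 2; v 2 0; v 1 0]
  else [:: y].

Lemma toi_K3K3 : toi_immersion (rook 3 3) 4.
Proof.
pose v := rook_vertex 2 2.
apply: (@toi_immersion_of_routing _ _ [:: v 0 0; v 0 1; v 0 2; v 1 0] K3K3_route) => //.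
by apply: toi_routing_checkP; vm_compute.
Qed.

Lemma K2K3_search : toi_search_refutes (rook 2 3) (rook_vertices 1 2) 4.
Proof. by vm_compute. Qed.

Lemma K3K3_search : toi_search_refutes (rook 3 3) (rook_vertices 2 2) 5.
Proof. by vm_compute. Qed.

Lemma toi_rook_search t s n :
  toi_search_refutes (rook t.+1 s.+1) (rook_vertices t s) (t + s + 1) ->
  toi_immersion (rook t.+1 s.+1) n -> n <= t + s.
Proof.
move=> refute imm; have := toi_rook_le (ltn0Sn t) (ltn0Sn s) imm.
rewrite leq_eqVlt => /orP[/eqP n_max | ]; last by lia.
have no_max := toi_search_refutesP (@rook_sym _ _) (rook_vertices_uniq t s)
  (@mem_rook_vertices t s) refute.
by case: no_max; rewrite (_ : t + s + 1 = n) //; lia.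
Qed.

Theorem mainTheorem8 :
  (forall t s : nat, 2 <= t -> 2 <= s -> 4 <= maxn s t ->
     toi_is (cart_prod (complete_graph t) (complete_graph s)) (t + s - 1))
  /\ toi_is (cart_prod (complete_graph 3) (complete_graph 3)) 4
  /\ toi_is (cart_prod (complete_graph 2) (complete_graph 3)) 3.
Proof.
split; [|split].
- move=> t s t2 s2 m4; split; last by move=> n; apply: toi_rook_le; lia.
  wlog s4 : t s t2 s2 m4 / 3 < s.
    move=> wlog_s; case: (ltnP 3 s) => [s4 | s3]; first exact: wlog_s.
    by rewrite addnC; apply/toi_rook_swap/wlog_s => //; lia.
  case: t s t2 s2 s4 {m4} => [|t] [|s] // _ _ s4.
  have -> : t.+1 + s.+1 - 1 = t + s + 1 by lia.
  by apply: toi_cross; lia.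
- by split; [exact: toi_K3K3 | move=> n; apply: toi_rook_search K3K3_search].
by split; [exact: toi_K2K3 | move=> n; apply: toi_rook_search K2K3_search].
Qed.
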